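(* Let $R$ be a t-unital ring and $\widetilde R=\mathbb Z\oplus R$ its unitalization. Then the full subcategory of t-unital left $R$-modules is closed under kernels in the category of all (nonunital) left $R$-modules if and only if $R$ is a flat unital right $\widetilde R$-module.
   Context: Rings are associative, not necessarily unital; modules are not assumed unital. $\widetilde R=\mathbb Z\oplus R$ is the unital ring obtained by formally adjoining a unit, with $R$ a two-sided ideal; nonunital $R$-modules are the same as unital $\widetilde R$-modules. $R$ is t-unital if $R\otimes_R R\to R$ is an isomorphism. A left $R$-module $M$ is t-unital if $R\otimes_R M\to M$, $r\otimes m\mapsto rm$, is an isomorphism. *)

From HB Require Import structures.
From mathcomp Require Import all_boot all_order all_algebra.
Set Implicit Arguments. Unset Strict Implicit. Unset Printing Implicit Defensive.
Import GRing.Theory.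
Local Open Scope ring_scope.

Record NRing := {
  nr_carrier :> zmodType;
  nmul : nr_carrier -> nr_carrier -> nr_carrier;
  nmulA : forall x y z, nmul x (nmul y z) = nmul (nmul x y) z;
  nmulDl : forall x y z, nmul (x + y) z = nmul x z + nmul y z;
  nmulDr : forall x y z, nmul x (y + z) = nmul x y + nmul x z }.

Record LMod (R : NRing) := {
  lm_carrier :> zmodType;
  lact : R -> lm_carrier -> lm_carrier;
  lactDl : forall r s m, lact (r + s) m = lact r m + lact s m;
  lactDr : forall r m n, lact r (m + n) = lact r m + lact r n;
  lactA : forall r s m, lact (nmul r s) m = lact r (lact s m) }.

Definition lmod_linear (R : NRing) (M N : LMod R) (f : M -> N) : Prop :=
  (forall x y, f (x + y) = f x + f y) /\ (forall r x, f (lact r x) = lact r (f x)).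

(* Every element of X (x)_S M is a finite sum of pure
   tensors, represented by a formal sum s : seq (X * M).  Such a formal sum is
   zero in X (x)_S M iff it is killed by every S-balanced biadditive map
   (universal property of the tensor product). ---------- *)
Definition balanced (S : Type) (X M : zmodType) (ract : X -> S -> X)
  (lact' : S -> M -> M) (A : zmodType) (f : X -> M -> A) : Prop :=
  [/\ forall x y m, f (x + y) m = f x m + f y m,
      forall x m n, f x (m + n) = f x m + f x n &
      forall x a m, f (ract x a) m = f x (lact' a m)].

Definition tensor_zero (S : Type) (X M : zmodType) (ract : X -> S -> X)
  (lact' : S -> M -> M) (s : seq (X * M)) : Prop :=
  forall (A : zmodType) (f : X -> M -> A), balanced ract lact' f ->
    \sum_(p <- s) f p.1 p.2 = 0.

(* t-unital left R-module: the multiplication map R (x)_R M -> M,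
   r (x) m |-> r m, is an isomorphism (i.e. surjective with trivial kernel). *)
Definition tunital_mod (R : NRing) (M : LMod R) : Prop :=
  (forall m : M, exists s : seq (R * M), m = \sum_(p <- s) lact p.1 p.2) /\
  (forall s : seq (R * M), \sum_(p <- s) lact p.1 p.2 = 0 ->
     tensor_zero (fun x y : R => nmul x y) (@lact R M) s).

(* t-unital ring: R (x)_R R -> R is an isomorphism. *)
Definition tunital_ring (R : NRing) : Prop :=
  (forall m : R, exists s : seq (R * R), m = \sum_(p <- s) nmul p.1 p.2) /\
  (forall s : seq (R * R), \sum_(p <- s) nmul p.1 p.2 = 0 ->
     tensor_zero (fun x y : R => nmul x y) (fun x y : R => nmul x y) s).

Definition Rt (R : NRing) := (int * R)%type.
Definition rt_mul (R : NRing) (a b : Rt R) : Rt R :=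
  (a.1 * b.1, b.2 *~ a.1 + a.2 *~ b.1 + nmul a.2 b.2).
Definition rt_one (R : NRing) : Rt R := (1, 0).

Record ULModRt (R : NRing) := {
  um_carrier :> zmodType;
  uact : Rt R -> um_carrier -> um_carrier;
  uactDl : forall a b m, uact (a + b) m = uact a m + uact b m;
  uactDr : forall a m n, uact a (m + n) = uact a m + uact a n;
  uactA : forall a b m, uact (rt_mul a b) m = uact a (uact b m);
  uact1 : forall m, uact (rt_one R) m = m }.

Definition urt_linear (R : NRing) (N N' : ULModRt R) (g : N -> N') : Prop :=
  (forall x y, g (x + y) = g x + g y) /\ (forall a x, g (uact a x) = uact a (g x)).

Definition R_ract (R : NRing) (r : R) (a : Rt R) : R := r *~ a.1 + nmul r a.2.

(* R is flat as a right R~-module: R (x)_{R~} - preserves injections,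
   i.e. for every injective R~-linear g : N -> N', the induced map
   R (x)_{R~} N -> R (x)_{R~} N' has trivial kernel. *)
Definition flat_R_over_Rt (R : NRing) : Prop :=
  forall (N N' : ULModRt R) (g : N -> N'), urt_linear g -> injective g ->
    forall s : seq (R * N),
      tensor_zero (@R_ract R) (@uact R N') [seq (p.1, g p.2) | p <- s] ->
      tensor_zero (@R_ract R) (@uact R N) s.

(* The full subcategory of t-unital left R-modules is closed under kernels in
   the category of all left R-modules: for every R-linear f : M -> N between
   t-unital modules, every kernel of f (an injective R-linear i : K -> M with
   image exactly ker f) has t-unital source. *)
Definition tunital_closed_under_kernels (R : NRing) : Prop :=
  forall (M N K : LMod R) (f : M -> N) (i : K -> M),
    tunital_mod M -> tunital_mod N ->
    lmod_linear f -> lmod_linear i -> injective i ->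
    (forall m : M, f m = 0 <-> exists k : K, i k = m) ->
    tunital_mod K.

(* Writing X (x)_S M for the free abelian group on X * M modulo the elements
   killed by every S-balanced map, the vanishing of a formal sum in the sense
   of [tensor_zero] becomes an equation in a Z-module, and t-unitality of M
   says that multiplication R (x)_R M -> M is bijective; moreover
   R (x)_R M = R (x)_{R~} M, since R-balanced and R~-balanced maps coincide.

   Closure under kernels implies flatness: for an injective g : N -> N' of
   unital R~-modules, R (x)_{R~} N' is t-unital (R (x)_R R = R lets one undo
   the multiplication), and so is the cokernel of R (x) g, hence by
   hypothesis so is the image K of R (x) g.  Multiplication on K factors
   through g, so every balanced map on R x N induces a balanced map on R x K;
   since r (x) g n = sum a_i (b_i (x) g n) in K whenever r = sum a_i b_i,
   a relation sum r_j (x) g n_j = 0 pulls back to sum r_j (x) n_j = 0.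

   Flatness implies closure under kernels: for K = ker (f : M -> N) with M, N
   t-unital, flatness makes R (x) K -> R (x) M -> M injective.  If
   k = sum r_j m_j, then sum r_j (x) f m_j vanishes in R (x) N, hence by
   flatness in R (x) im f, so sum r_j (x) m_j lies in the image of R (x) K,
   and multiplying out writes k as an element of R K. *)

From HB Require Import structures.
From mathcomp Require Import all_boot all_order all_algebra.
From mathcomp Require Import boolp freeg.
Set Implicit Arguments. Unset Strict Implicit. Unset Printing Implicit Defensive.
Import GRing.Theory Quotient.
Local Open Scope ring_scope.
Local Open Scope quotient_scope.

Lemma zmod_morphism_of_morphD (U V : zmodType) (f : U -> V) :
  {morph f : x y / x + y} -> zmod_morphism f.
Proof. by move=> fD x y; apply: (addIr (f y)); rewrite -fD !subrK. Qed.

Section MorphD.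
Variables (U V : zmodType) (f : U -> V).
Hypothesis fD : {morph f : x y / x + y}.

Let fA : {additive U -> V} :=
  HB.pack f (GRing.isZmodMorphism.Build U V f (zmod_morphism_of_morphD fD)).

Lemma morphD0 : f 0 = 0.
Proof. exact: raddf0 fA. Qed.

Lemma morphD_mulrz x n : f (x *~ n) = f x *~ n.
Proof. exact: raddfMz fA n x. Qed.

Lemma morphD_sum (I : Type) (r : seq I) (F : I -> U) :
  f (\sum_(i <- r) F i) = \sum_(i <- r) f (F i).
Proof. exact (raddf_sum fA r xpredT F). Qed.
End MorphD.

Section ImagePred.
Variables (A B : zmodType) (h : {additive A -> B}).

Definition image_pred : {pred B} := fun y => `[< exists x, h x = y >].

Lemma image_predP y : reflect (exists x, h x = y) (y \in image_pred).
Proof. exact: asboolP. Qed.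

Lemma image_pred_closed : zmod_closed image_pred.
Proof.
split=> [|_ _ /image_predP[x <-] /image_predP[y <-]]; apply/image_predP.
  by exists 0; rewrite raddf0.
by exists (x - y); rewrite raddfB.
Qed.

HB.instance Definition _ := GRing.isZmodClosed.Build B image_pred image_pred_closed.

Lemma image_pred_im x : h x \in image_pred.
Proof. by apply/image_predP; exists x. Qed.
End ImagePred.

Section QuotLift.
Variables (G A : zmodType) (I : zmodClosed G).

Lemma pi_quot_eq0 (x : G) : (\pi_{quot I} x == 0) = (x \in I).
Proof. by rewrite -(raddf0 \pi_{quot I}) -idealrBE subr0. Qed.

Lemma repr_quotB (x : G) : repr (\pi_{quot I} x) - x \in I.
Proof. by rewrite idealrBE reprK. Qed.

Definition quot_lift (h : G -> A) (q : {quot I}) : A := h (repr q).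

Variable h : {additive G -> A}.
Hypothesis h_I : {in I, forall x, h x = 0}.

Lemma quot_liftE x : quot_lift h (\pi x) = h x.
Proof. by apply/eqP; rewrite -subr_eq0 /quot_lift -raddfB h_I ?repr_quotB. Qed.

Lemma quot_liftD : {morph quot_lift h : p q / p + q}.
Proof.
by elim/quotW=> x; elim/quotW=> y; rewrite -raddfD !quot_liftE raddfD.
Qed.
End QuotLift.

Section Tensor.
Variables (S : Type) (X M : zmodType) (ract : X -> S -> X) (la : S -> M -> M).

Definition bilift (A : zmodType) (f : X -> M -> A) : {freeg (X * M)} -> A :=
  fglift (fun p => f p.1 p.2 : zmodule A).

HB.instance Definition _ (A : zmodType) (f : X -> M -> A) :=
  GRing.isZmodMorphism.Build _ A (bilift f)
    (lift_is_additive (fun p => f p.1 p.2 : zmodule A)).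

Lemma bilift_gen (A : zmodType) (f : X -> M -> A) x m : bilift f << (x, m) >> = f x m.
Proof. by rewrite /bilift liftU scale1r. Qed.

Definition balanced_kernel : {pred {freeg (X * M)}} := fun z =>
  `[< forall (A : zmodType) (f : X -> M -> A), balanced ract la f -> bilift f z = 0 >].

Lemma balanced_kernelP z :
  reflect (forall (A : zmodType) (f : X -> M -> A), balanced ract la f -> bilift f z = 0)
          (z \in balanced_kernel).
Proof. exact: asboolP. Qed.

Lemma balanced_kernel_closed : zmod_closed balanced_kernel.
Proof.
split=> [|u v /balanced_kernelP u0 /balanced_kernelP v0]; apply/balanced_kernelP.
  by move=> A f _; rewrite raddf0.
by move=> A f bf; rewrite raddfB /= (u0 _ _ bf) (v0 _ _ bf) subr0.
Qed.

HB.instance Definition _ :=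
  GRing.isZmodClosed.Build _ balanced_kernel balanced_kernel_closed.

Definition tensor := {quot balanced_kernel}.

Definition tens (x : X) (m : M) : tensor := \pi << (x, m) >>.

(* The junk value 0 for unbalanced [f] makes [tensor_lift f] additive for every [f]. *)
Definition tensor_lift (A : zmodType) (f : X -> M -> A) (t : tensor) : A :=
  if `[< balanced ract la f >] then quot_lift (bilift f) t else 0.

Section Lift.
Variables (A : zmodType) (f : X -> M -> A).

Lemma tensor_lift_pi : balanced ract la f -> forall z, tensor_lift f (\pi z) = bilift f z.
Proof.
move=> bf z; rewrite /tensor_lift asboolT // quot_liftE // => u /balanced_kernelP.
exact.
Qed.

Lemma tensor_liftE : balanced ract la f -> forall x m, tensor_lift f (tens x m) = f x m.
Proof. by move=> bf x m; rewrite tensor_lift_pi // bilift_gen. Qed.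

Lemma tensor_lift_is_zmod_morphism : zmod_morphism (tensor_lift f).
Proof.
apply: zmod_morphism_of_morphD; rewrite /tensor_lift.
case: asboolP => [bf|_ ? ?]; last by rewrite addr0.
by apply: quot_liftD => u /balanced_kernelP; apply.
Qed.

HB.instance Definition _ :=
  GRing.isZmodMorphism.Build tensor A (tensor_lift f) tensor_lift_is_zmod_morphism.
End Lift.

Lemma pi_tensor_eq u v :
  (forall (A : zmodType) (f : X -> M -> A), balanced ract la f -> bilift f u = bilift f v) ->
  \pi_tensor u = \pi v.
Proof.
move=> uv; apply/eqP; rewrite -subr_eq0 -raddfB pi_quot_eq0.
by apply/balanced_kernelP => A f bf; rewrite raddfB /= uv ?subrr.
Qed.

Lemma tens_balanced : balanced ract la tens.
Proof.
split=> [x y m|x m n|x a m]; rewrite /tens -?raddfD;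
  apply: pi_tensor_eq => A f [fDl fDr fA]; by rewrite ?raddfD /= !bilift_gen ?fDl ?fDr ?fA.
Qed.

Lemma tensor_sumP (t : tensor) : exists s : seq (X * M), t = \sum_(p <- s) tens p.1 p.2.
Proof.
have [tensDl _ _] := tens_balanced.
elim/quotW: t => z; exists [seq (p.1 *~ coeff p z, p.2) | p <- dom z].
rewrite -{1}(freeg_sumE z) raddf_sum [RHS]big_map; apply: eq_bigr => -[x m] _ /=.
rewrite -[coeff _ z]intz -freegU_mulz raddfMz intz.
by rewrite (morphD_mulrz (fun x y => tensDl x y m)).
Qed.

Lemma tensor_morph_eq (A : zmodType) (f g : tensor -> A) :
  {morph f : x y / x + y} -> {morph g : x y / x + y} ->
  (forall x m, f (tens x m) = g (tens x m)) -> f =1 g.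
Proof.
move=> fD gD fg t; have [s ->] := tensor_sumP t.
by rewrite (morphD_sum fD) (morphD_sum gD); apply: eq_bigr => p _.
Qed.

Lemma tensor_zeroE s : tensor_zero ract la s <-> \sum_(p <- s) tens p.1 p.2 = 0.
Proof.
split=> [s0|s0 A f bf].
  have -> : \sum_(p <- s) tens p.1 p.2 = \pi_tensor (\sum_(p <- s) << (p.1, p.2) >>).
    by rewrite raddf_sum.
  apply/eqP; rewrite pi_quot_eq0; apply/balanced_kernelP => A f bf.
  rewrite raddf_sum /=; apply: etrans (s0 A f bf).
  by apply: eq_bigr => p _; rewrite bilift_gen.
have := congr1 (tensor_lift f) s0; rewrite raddf0 raddf_sum /=; apply: etrans.
by apply: eq_bigr => p _; rewrite tensor_liftE.
Qed.
End Tensor.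

Arguments tensor_lift {S X M} ract la {A} f t.

HB.instance Definition _ (R : NRing) (x : R) :=
  GRing.isZmodMorphism.Build R R (nmul x) (zmod_morphism_of_morphD (nmulDr x)).

HB.instance Definition _ (R : NRing) (M : LMod R) (r : R) :=
  GRing.isZmodMorphism.Build M M (lact r) (zmod_morphism_of_morphD (lactDr r)).

Lemma lactMzl (R : NRing) (M : LMod R) (r : R) (m : M) n :
  lact (r *~ n) m = lact r m *~ n.
Proof. exact: (morphD_mulrz (fun r s => lactDl r s m)). Qed.

Section TensorLmod.
Variables (R : NRing) (S : Type) (M : zmodType) (ract : R -> S -> R) (la : S -> M -> M).
Hypothesis nmul_ract : forall r x a, nmul r (ract x a) = ract (nmul r x) a.
Local Notation tens := (tens ract la).

Lemma tens_nmul_balanced r : balanced ract la (fun x m => tens (nmul r x) m).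
Proof.
have [tDl tDr tA] := tens_balanced ract la.
by split=> *; rewrite ?nmulDr ?nmul_ract ?tDl ?tDr ?tA.
Qed.

Definition tensor_lact (r : R) : tensor ract la -> tensor ract la :=
  tensor_lift ract la (fun x m => tens (nmul r x) m).

HB.instance Definition _ (r : R) := GRing.isZmodMorphism.Build _ _ (tensor_lact r)
  (raddfB (tensor_lift ract la (fun x m => tens (nmul r x) m))).

Lemma tensor_lactE r x m : tensor_lact r (tens x m) = tens (nmul r x) m.
Proof. exact: tensor_liftE (tens_nmul_balanced r) x m. Qed.

Lemma tensor_lactDl r s t : tensor_lact (r + s) t = tensor_lact r t + tensor_lact s t.
Proof.
have [tDl _ _] := tens_balanced ract la.
move: t; apply: tensor_morph_eq => [t t'|t t'|x m].
- exact: raddfD.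
- by rewrite !raddfD addrACA.
- by rewrite !tensor_lactE nmulDl tDl.
Qed.

Lemma tensor_lactA r s t : tensor_lact (nmul r s) t = tensor_lact r (tensor_lact s t).
Proof.
move: t; apply: tensor_morph_eq => [t t'|t t'|x m]; rewrite ?raddfD //.
by rewrite !tensor_lactE nmulA.
Qed.

Definition tensor_lmod : LMod R :=
  Build_LMod tensor_lactDl (fun r => raddfD (tensor_lact r)) tensor_lactA.
End TensorLmod.

Arguments tensor_lact {R S M} ract la r t.

Section TensorMap.
Variables (R : NRing) (S : Type) (M N : zmodType) (ract : R -> S -> R).
Variables (laM : S -> M -> M) (laN : S -> N -> N) (g : M -> N).
Hypotheses (gD : {morph g : m n / m + n}) (g_la : forall a m, g (laM a m) = laN a (g m)).

Lemma tens_map_balanced : balanced ract laM (fun x m => tens ract laN x (g m)).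
Proof.
have [tDl tDr tA] := tens_balanced ract laN.
by split=> *; rewrite ?gD ?g_la ?tDl ?tDr ?tA.
Qed.

Definition tensor_map : tensor ract laM -> tensor ract laN :=
  tensor_lift ract laM (fun x m => tens ract laN x (g m)).

HB.instance Definition _ := GRing.isZmodMorphism.Build _ _ tensor_map
  (raddfB (tensor_lift ract laM (fun x m => tens ract laN x (g m)))).

Lemma tensor_mapE x m : tensor_map (tens ract laM x m) = tens ract laN x (g m).
Proof. exact: tensor_liftE tens_map_balanced x m. Qed.

Hypothesis nmul_ract : forall r x a, nmul r (ract x a) = ract (nmul r x) a.

Lemma tensor_map_lact r t :
  tensor_map (tensor_lact ract laM r t) = tensor_lact ract laN r (tensor_map t).
Proof.
move: t; apply: tensor_morph_eq => [t t'|t t'|x m]; rewrite ?raddfD //.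
by rewrite (tensor_lactE laM nmul_ract) !tensor_mapE (tensor_lactE laN nmul_ract).
Qed.
End TensorMap.

Arguments tensor_map {R S M N} ract laM laN g t.
Arguments tensor_mapE {R S M N ract laM laN g} gD g_la x m.

Section ImageCoker.
Variables (R : NRing) (A B : LMod R) (h : {additive A -> B}).
Hypothesis h_lact : forall r x, h (lact r x) = lact r (h x).
Local Notation I := (image_pred h).

Lemma image_pred_lact r y : y \in I -> lact r y \in I.
Proof. by case/image_predP=> x <-; rewrite -h_lact image_pred_im. Qed.

Record image_sub := ImageSub { image_val : B; image_valP : image_val \in I }.
HB.instance Definition _ := [isSub for image_val].
HB.instance Definition _ := [Choice of image_sub by <:].
HB.instance Definition _ := [SubChoice_isSubZmodule of image_sub by <:].

Definition image_lact r (y : image_sub) : image_sub :=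
  ImageSub (image_pred_lact r (image_valP y)).

Lemma image_lactDl r s y : image_lact (r + s) y = image_lact r y + image_lact s y.
Proof. by apply: val_inj; rewrite /= lactDl. Qed.

Lemma image_lactDr r y z : image_lact r (y + z) = image_lact r y + image_lact r z.
Proof. by apply: val_inj; rewrite /= lactDr. Qed.

Lemma image_lactA r s y : image_lact (nmul r s) y = image_lact r (image_lact s y).
Proof. by apply: val_inj; rewrite /= lactA. Qed.

Definition image_lmod : LMod R := Build_LMod image_lactDl image_lactDr image_lactA.

Definition coker_lact r : {quot I} -> {quot I} := quot_lift (\pi_{quot I} \o lact r).

Lemma coker_lactE r x : coker_lact r (\pi x) = \pi_{quot I} (lact r x).
Proof.
apply: quot_liftE => y Iy /=; apply/eqP; rewrite pi_quot_eq0.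
exact: image_pred_lact.
Qed.

Lemma coker_lactDl r s q : coker_lact (r + s) q = coker_lact r q + coker_lact s q.
Proof. by elim/quotW: q => x; rewrite !coker_lactE lactDl raddfD. Qed.

Lemma coker_lactDr r p q : coker_lact r (p + q) = coker_lact r p + coker_lact r q.
Proof.
by elim/quotW: p => x; elim/quotW: q => y; rewrite -raddfD !coker_lactE lactDr raddfD.
Qed.

Lemma coker_lactA r s q : coker_lact (nmul r s) q = coker_lact r (coker_lact s q).
Proof. by elim/quotW: q => x; rewrite !coker_lactE lactA. Qed.

Definition coker_lmod : LMod R := Build_LMod coker_lactDl coker_lactDr coker_lactA.
End ImageCoker.

Section Unitalization.
Variable R : NRing.

Lemma R_ract_nmul (r x : R) a : nmul r (R_ract x a) = R_ract (nmul r x) a.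
Proof. by rewrite /R_ract raddfD raddfMz /= nmulA. Qed.

Lemma R_ractDl (x y : R) a : R_ract (x + y) a = R_ract x a + R_ract y a.
Proof. by rewrite /R_ract mulrzDl nmulDl addrACA. Qed.

Lemma R_ract_R (x y : R) : R_ract x (0, y) = nmul x y.
Proof. by rewrite /R_ract mulr0z add0r. Qed.

Lemma rt_mul_R (x : R) a : rt_mul (0, x) a = (0, R_ract x a).
Proof. by rewrite /rt_mul /R_ract /= mul0r mulr0z add0r. Qed.

Variable M : LMod R.

Definition lmod_uact (a : Rt R) (m : M) : M := m *~ a.1 + lact a.2 m.

Lemma lmod_uactDl a b m : lmod_uact (a + b) m = lmod_uact a m + lmod_uact b m.
Proof. by rewrite /lmod_uact mulrzDr lactDl addrACA. Qed.

Lemma lmod_uactDr a m n : lmod_uact a (m + n) = lmod_uact a m + lmod_uact a n.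
Proof. by rewrite /lmod_uact mulrzDl raddfD addrACA. Qed.

Lemma lmod_uactA a b m : lmod_uact (rt_mul a b) m = lmod_uact a (lmod_uact b m).
Proof.
rewrite /lmod_uact /rt_mul /= !lactDl lactA !lactMzl raddfD raddfMz /= mulrzDl.
by rewrite -mulrzA mulrC !addrA (addrAC _ (lact a.2 m *~ b.1)).
Qed.

Lemma lmod_uact1 m : lmod_uact (rt_one R) m = m.
Proof. by rewrite /lmod_uact /= (morphD0 (fun r s => lactDl r s m)) addr0. Qed.

Definition ulmod_of : ULModRt R :=
  Build_ULModRt lmod_uactDl lmod_uactDr lmod_uactA lmod_uact1.

Lemma balanced_RtE (A : zmodType) (f : R -> M -> A) :
  balanced (fun x y : R => nmul x y) (@lact R M) f <->
  balanced (@R_ract R) (@uact R ulmod_of) f.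
Proof.
split=> -[fDl fDr fA]; split=> // x a m.
  rewrite /= /lmod_uact /R_ract fDl fDr fA.
  by rewrite (morphD_mulrz (fun x y => fDl x y m)) (morphD_mulrz (fDr x)).
by rewrite -R_ract_R fA /= /lmod_uact mulr0z add0r.
Qed.

Lemma tensor_zero_RtE s :
  tensor_zero (fun x y : R => nmul x y) (@lact R M) s <->
  tensor_zero (@R_ract R) (@uact R ulmod_of) s.
Proof. by split=> s0 A f /balanced_RtE; apply: s0. Qed.
End Unitalization.

Lemma urt_linear_of_lmod (R : NRing) (M N : LMod R) (f : M -> N) :
  lmod_linear f -> urt_linear (N := ulmod_of M) (N' := ulmod_of N) f.
Proof.
case=> fD f_lact; split=> // a m.
by rewrite /= /lmod_uact fD f_lact (morphD_mulrz fD).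
Qed.

Definition regular_lmod (R : NRing) : LMod R :=
  Build_LMod (@nmulDl R) (@nmulDr R) (fun r s x => esym (nmulA r s x)).

Section Multiplication.
Variables (R : NRing) (M : LMod R).
Local Notation nmul' := (fun x y : R => nmul x y).

Lemma lact_balanced : balanced nmul' (@lact R M) (@lact R M).
Proof. by split=> *; rewrite ?lactDl ?lactDr ?lactA. Qed.

Definition lmod_mult : tensor nmul' (@lact R M) -> M := tensor_lift _ _ (@lact R M).

HB.instance Definition _ := GRing.isZmodMorphism.Build _ _ lmod_mult
  (raddfB (tensor_lift nmul' (@lact R M) (@lact R M))).

Lemma lmod_multE r m : lmod_mult (tens _ _ r m) = lact r m.
Proof. exact: tensor_liftE lact_balanced r m. Qed.

Lemma tunital_balanced_sum_eq : tunital_mod M ->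
  forall (A : zmodType) (F : R -> M -> A), balanced nmul' (@lact R M) F ->
  forall u v : seq (R * M), \sum_(p <- u) lact p.1 p.2 = \sum_(p <- v) lact p.1 p.2 ->
  \sum_(p <- u) F p.1 p.2 = \sum_(p <- v) F p.1 p.2.
Proof.
case=> _ M_inj A F bF u v uv.
pose tsum (w : seq (R * M)) := \sum_(p <- w) tens nmul' (@lact R M) p.1 p.2.
have tsum_mult w : lmod_mult (tsum w) = \sum_(p <- w) lact p.1 p.2.
  by rewrite raddf_sum /=; apply: eq_bigr => p _; rewrite lmod_multE.
have tsum_lift w : tensor_lift _ _ F (tsum w) = \sum_(p <- w) F p.1 p.2.
  by rewrite raddf_sum /=; apply: eq_bigr => p _; rewrite tensor_liftE.
suff tuv : tsum u = tsum v by rewrite -!tsum_lift tuv.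
have [s uv_s] := tensor_sumP (tsum u - tsum v).
change (tsum u - tsum v = tsum s) in uv_s.
apply/eqP; rewrite -subr_eq0 uv_s; apply/eqP/tensor_zeroE/M_inj.
by rewrite -tsum_mult -uv_s raddfB /= !tsum_mult uv subrr.
Qed.
End Multiplication.

Lemma lmod_mult_map (R : NRing) (L M : LMod R) (i : L -> M) (i_lin : lmod_linear i) t :
  lmod_mult (tensor_map (fun x y : R => nmul x y) (@lact R L) (@lact R M) i t) =
  i (lmod_mult t).
Proof.
case: i_lin => iD i_lact; move: t; apply: tensor_morph_eq => [t t'|t t'|r m].
- by rewrite !raddfD.
- by rewrite !raddfD iD.
- by rewrite (tensor_mapE iD i_lact) !lmod_multE i_lact.
Qed.

Section CokerTunital.
Variables (R : NRing) (A B : LMod R) (h : {additive A -> B}).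
Hypothesis h_lact : forall r x, h (lact r x) = lact r (h x).
Local Notation nmul' := (fun x y : R => nmul x y).
Local Notation Q := {quot image_pred h}.

Lemma tunital_coker :
  (forall a : A, exists s : seq (R * A), a = \sum_(p <- s) lact p.1 p.2) ->
  tunital_mod B -> tunital_mod (coker_lmod h_lact).
Proof.
move=> A_gen [B_gen B_inj]; split.
  elim/quotW=> y; have [s ->] := B_gen y.
  exists [seq (p.1, \pi_Q p.2) | p <- s]; rewrite raddf_sum big_map.
  by apply: eq_bigr => p _; rewrite /= (coker_lactE h_lact).
move=> s s0 C F [FDl FDr FA].
pose F' r (y : B) := F r (\pi_Q y).
have bF' : balanced nmul' (@lact R B) F'.
  by split=> *; rewrite /F' ?raddfD ?FDl ?FDr ?FA //= (coker_lactE h_lact).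
have /image_predP[a ha] : \sum_(p <- s) lact p.1 (repr p.2) \in image_pred h.
  rewrite -pi_quot_eq0; apply/eqP; rewrite raddf_sum /=; apply: etrans _ s0.
  apply: eq_bigr => p _; rewrite -(coker_lactE h_lact).
  by congr coker_lact; exact: reprK.
have [u ua] := A_gen a.
have FE : \sum_(p <- [seq (p.1, repr p.2) | p <- s]) F' p.1 p.2 =
          \sum_(p <- [seq (p.1, h p.2) | p <- u]) F' p.1 p.2.
  apply: (tunital_balanced_sum_eq (conj B_gen B_inj) bF').
  rewrite !big_map /= -ha ua raddf_sum /=.
  by apply: eq_bigr => p _; rewrite h_lact.
rewrite !big_map /= in FE.
have -> : \sum_(p <- s) F p.1 p.2 = \sum_(p <- s) F' p.1 (repr p.2).
  by apply: eq_bigr => p _; rewrite /F' reprK.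
rewrite FE big1 // => p _.
apply: etrans _ (morphD0 (FDr p.1)); congr (F _ _).
by apply/eqP; rewrite pi_quot_eq0 image_pred_im.
Qed.
End CokerTunital.

Section UnitalMultiplication.
Variables (R : NRing) (N : ULModRt R).

Lemma uact_R_balanced : balanced (@R_ract R) (@uact R N) (fun x n => uact (0, x) n).
Proof. by split=> *; rewrite ?uactDr -?uactA ?rt_mul_R // -uactDl. Qed.

Definition ulmod_mult : tensor (@R_ract R) (@uact R N) -> N :=
  tensor_lift _ _ (fun x n => uact (0, x) n).

HB.instance Definition _ := GRing.isZmodMorphism.Build _ _ ulmod_mult
  (raddfB (tensor_lift (@R_ract R) (@uact R N) (fun x n => uact (0, x) n))).

Lemma ulmod_multE x n : ulmod_mult (tens _ _ x n) = uact (0, x) n.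
Proof. exact: tensor_liftE uact_R_balanced x n. Qed.

Lemma ulmod_mult_lact r t :
  ulmod_mult (tensor_lact (@R_ract R) (@uact R N) r t) = uact (0, r) (ulmod_mult t).
Proof.
move: t; apply: tensor_morph_eq => [t t'|t t'|x n]; rewrite ?raddfD ?uactDr //.
by rewrite (tensor_lactE _ (@R_ract_nmul R)) !ulmod_multE -uactA rt_mul_R R_ract_R.
Qed.
End UnitalMultiplication.

Lemma ulmod_mult_map (R : NRing) (N N' : ULModRt R) (g : N -> N') (g_lin : urt_linear g)
    t :
  ulmod_mult (tensor_map (@R_ract R) (@uact R N) (@uact R N') g t) = g (ulmod_mult t).
Proof.
case: g_lin => gD g_uact; move: t; apply: tensor_morph_eq => [t t'|t t'|x n].
- by rewrite !raddfD.
- by rewrite !raddfD gD.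
- by rewrite (tensor_mapE gD g_uact) !ulmod_multE g_uact.
Qed.

Section TensorRt.
Variables (R : NRing) (tR : tunital_ring R) (N : ULModRt R).
Local Notation nmul' := (fun x y : R => nmul x y).
Local Notation T := (tensor_lmod (@uact R N) (@R_ract_nmul R)).
Local Notation tens := (tens (@R_ract R) (@uact R N)).

Definition rfactor (x : R) : seq (R * R) := proj1_sig (cid (tR.1 x)).

Lemma rfactorE x : x = \sum_(p <- rfactor x) nmul p.1 p.2.
Proof. by rewrite /rfactor; case: cid. Qed.

Lemma tens_rfactor x n : tens x n = \sum_(p <- rfactor x) lact p.1 (tens p.2 n : T).
Proof.
have [tDl _ _] := tens_balanced (@R_ract R) (@uact R N).
rewrite {1}[x]rfactorE (morphD_sum (fun x y => tDl x y n)).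
by apply: eq_bigr => p _; rewrite /= (tensor_lactE _ (@R_ract_nmul R)).
Qed.

Lemma tensor_Rt_gen (t : T) : exists s : seq (R * T), t = \sum_(p <- s) lact p.1 p.2.
Proof.
have [s ->] := tensor_sumP t.
exists (flatten [seq [seq (q.1, tens q.2 p.2 : T) | q <- rfactor p.1] | p <- s]).
rewrite big_flatten big_map; apply: eq_bigr => p _.
by rewrite big_map tens_rfactor.
Qed.

Section Associativity.
Variables (A : zmodType) (F : R -> T -> A).
Hypothesis bF : balanced nmul' (@lact R T) F.

(* With x = sum a_i b_i, [assoc_map x n] is sum F a_i (b_i (x) n); it does not
   depend on the factorisation because R is t-unital, and its lift inverts the
   multiplication R (x)_R T -> T. *)
Definition assoc_map (x : R) (n : N) : A := \sum_(p <- rfactor x) F p.1 (tens p.2 n).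

Lemma assoc_mapE x n u : x = \sum_(p <- u) nmul p.1 p.2 ->
  assoc_map x n = \sum_(p <- u) F p.1 (tens p.2 n).
Proof.
have [FDl FDr FA] := bF; have [tDl tDr tA] := tens_balanced (@R_ract R) (@uact R N).
move=> xu; have bFn : balanced nmul' nmul' (fun a b => F a (tens b n)).
  split=> *; rewrite ?FDl ?tDl ?FDr ?FA //=.
  by rewrite (tensor_lactE _ (@R_ract_nmul R)).
by apply: (tunital_balanced_sum_eq (M := regular_lmod R) tR bFn); rewrite -rfactorE.
Qed.

Lemma assoc_map_balanced : balanced (@R_ract R) (@uact R N) assoc_map.
Proof.
have [FDl FDr FA] := bF; have [tDl tDr tA] := tens_balanced (@R_ract R) (@uact R N).
split=> [x y n|x n n'|x a n].
- rewrite (@assoc_mapE _ _ (rfactor x ++ rfactor y)); first by rewrite big_cat.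
  by rewrite big_cat -!rfactorE.
- by rewrite /assoc_map -big_split; apply: eq_bigr => p _; rewrite tDr FDr.
rewrite (@assoc_mapE _ _ [seq (p.1, R_ract p.2 a) | p <- rfactor x]).
  by rewrite big_map; apply: eq_bigr => p _; rewrite tA.
rewrite big_map /=; under eq_bigr do rewrite R_ract_nmul.
by rewrite -(morphD_sum (fun x y => R_ractDl x y a)) -rfactorE.
Qed.

Lemma assoc_map_lact r (t : T) :
  tensor_lift (@R_ract R) (@uact R N) assoc_map (lact r t) = F r t.
Proof.
have [_ FDr _] := bF.
move: t; apply: tensor_morph_eq => [t t'|t t'|x n]; rewrite ?raddfD ?FDr //=.
rewrite (tensor_lactE _ (@R_ract_nmul R)) (tensor_liftE assoc_map_balanced).
by rewrite (@assoc_mapE _ _ [:: (r, x)]) ?big_seq1.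
Qed.
End Associativity.

Lemma tunital_tensor_Rt : tunital_mod T.
Proof.
split; first exact: tensor_Rt_gen.
move=> s s0 A F bF.
have := congr1 (tensor_lift (@R_ract R) (@uact R N) (assoc_map F)) s0.
rewrite raddf0 raddf_sum /=; apply: etrans.
by apply: eq_bigr => p _; rewrite assoc_map_lact.
Qed.
End TensorRt.

Section FlatOfClosedUnderKernels.
Variables (R : NRing) (tR : tunital_ring R) (closed : tunital_closed_under_kernels R).
Variables (N N' : ULModRt R) (g : N -> N').
Hypotheses (g_lin : urt_linear g) (g_inj : injective g).
Local Notation T := (tensor_lmod (@uact R N) (@R_ract_nmul R)).
Local Notation T' := (tensor_lmod (@uact R N') (@R_ract_nmul R)).
Local Notation h := (tensor_map (@R_ract R) (@uact R N) (@uact R N') g).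
Local Notation tens := (tens (@R_ract R)).

Let h_lact r (t : T) : h (lact r t) = lact r (h t : T').
Proof. by case: g_lin => gD g_uact; apply: (tensor_map_lact gD g_uact (@R_ract_nmul R)). Qed.

Local Notation K := (@image_lmod R T T' _ h_lact).
Local Notation C := (@coker_lmod R T T' _ h_lact).

Lemma tunital_image_tensor_map : tunital_mod K.
Proof.
apply: (@closed T' C K (fun t => \pi t) val).
- exact: tunital_tensor_Rt.
- exact: (@tunital_coker R T T' _ h_lact (tensor_Rt_gen tR (N := N))
                          (tunital_tensor_Rt tR N')).
- by split=> [|r t]; [exact: raddfD | rewrite /= coker_lactE].
- by split.
- exact: val_inj.
move=> t; split=> [/eqP|[k <-]].
  by rewrite pi_quot_eq0 => It; exists (ImageSub It).
by apply/eqP; rewrite pi_quot_eq0; exact: image_valP.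
Qed.

Lemma ulmod_mult_image_sub (k : K) : exists n : N, g n = ulmod_mult (val k).
Proof.
case/image_predP: (image_valP k) => t tk; exists (ulmod_mult t).
by rewrite -(ulmod_mult_map g_lin) tk.
Qed.

Definition image_mult (k : K) : N := proj1_sig (cid (ulmod_mult_image_sub k)).

Lemma image_multE k : g (image_mult k) = ulmod_mult (val k).
Proof. exact: proj2_sig (cid (ulmod_mult_image_sub k)). Qed.

Lemma image_multD : {morph image_mult : k k' / k + k'}.
Proof.
case: g_lin => gD _ k k'; apply: g_inj.
by rewrite gD !image_multE !raddfD.
Qed.

Lemma image_mult_lact r k : image_mult (lact r k) = uact (0, r) (image_mult k).
Proof.
case: g_lin => _ g_uact; apply: g_inj.
by rewrite g_uact !image_multE /= ulmod_mult_lact.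
Qed.

Definition image_tens (x : R) (n : N) : K :=
  @ImageSub R T T' _ (h (tens _ x n)) (image_pred_im _ _).

Lemma image_mult_tens x n : image_mult (image_tens x n) = uact (0, x) n.
Proof.
case: g_lin => gD g_uact; apply: g_inj.
by rewrite image_multE /= (tensor_mapE gD g_uact) ulmod_multE g_uact.
Qed.

Lemma image_tens_rfactor x n :
  image_tens x n = \sum_(p <- rfactor tR x) lact p.1 (image_tens p.2 n).
Proof.
apply: val_inj; rewrite raddf_sum /= (tens_rfactor tR) raddf_sum /=.
by apply: eq_bigr => p _; rewrite h_lact.
Qed.

Lemma tensor_zero_Rt_reflect s :
  tensor_zero (@R_ract R) (@uact R N') [seq (p.1, g p.2) | p <- s] ->
  tensor_zero (@R_ract R) (@uact R N) s.
Proof.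
move=> /tensor_zeroE s0 A f [fDl fDr fA].
pose SK := flatten [seq [seq (q.1, image_tens q.2 p.2) | q <- rfactor tR p.1] | p <- s].
have SK0 : \sum_(q <- SK) lact q.1 q.2 = 0 :> K.
  rewrite big_flatten big_map.
  under eq_bigr do rewrite big_map -image_tens_rfactor.
  apply: val_inj; rewrite raddf_sum raddf0 -[RHS]s0 big_map.
  case: g_lin => gD g_uact; apply: eq_bigr => p _.
  by rewrite /= (tensor_mapE gD g_uact).
pose FK r (k : K) := f r (image_mult k).
have bFK : balanced (fun x y : R => nmul x y) (@lact R K) FK.
  split=> *; rewrite /FK ?fDl ?image_multD ?fDr //.
  by rewrite image_mult_lact -fA R_ract_R.
apply: etrans (tunital_image_tensor_map.2 SK SK0 A FK bFK).
rewrite big_flatten big_map; apply: eq_bigr => p _.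
rewrite big_map /FK; under eq_bigr do rewrite image_mult_tens -fA R_ract_R.
by rewrite -(morphD_sum (fun x y => fDl x y p.2)) -rfactorE.
Qed.
End FlatOfClosedUnderKernels.

Lemma flat_of_tunital_closed_under_kernels (R : NRing) :
  tunital_ring R -> tunital_closed_under_kernels R -> flat_R_over_Rt R.
Proof. by move=> tR closed N N' g g_lin g_inj; apply: tensor_zero_Rt_reflect. Qed.

Section ClosedUnderKernelsOfFlat.
Variables (R : NRing) (flat : flat_R_over_Rt R).
Variables (M N K : LMod R) (f : M -> N) (i : K -> M).
Hypotheses (M_tu : tunital_mod M) (N_tu : tunital_mod N).
Hypotheses (f_lin : lmod_linear f) (i_lin : lmod_linear i) (i_inj : injective i).
Hypothesis ker_f : forall m, f m = 0 <-> exists k, i k = m.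
Local Notation nmul' := (fun x y : R => nmul x y).
Local Notation tens := (tens nmul').

HB.instance Definition _ :=
  GRing.isZmodMorphism.Build M N f (zmod_morphism_of_morphD f_lin.1).
HB.instance Definition _ :=
  GRing.isZmodMorphism.Build K M i (zmod_morphism_of_morphD i_lin.1).

Lemma kernel_tensor_zero s :
  \sum_(p <- s) lact p.1 p.2 = 0 :> K -> tensor_zero nmul' (@lact R K) s.
Proof.
move=> s0; apply/tensor_zero_RtE.
apply: (flat (urt_linear_of_lmod i_lin) i_inj); apply/tensor_zero_RtE/M_tu.2.
rewrite big_map /=; under eq_bigr do rewrite -i_lin.2.
by rewrite -raddf_sum s0 raddf0.
Qed.

Local Notation L := (@image_lmod R M N f f_lin.2).
Local Notation Q := {quot image_pred (tensor_map nmul' (@lact R K) (@lact R M) i)}.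

Lemma image_sub_preimage (y : L) : exists m, f m = val y.
Proof. exact/image_predP/image_valP. Qed.

(* (r, f m) |-> r (x) m modulo the image of R (x) K; well defined as ker f = im i. *)
Definition image_lift (r : R) (y : L) : Q :=
  \pi_Q (tens (@lact R M) r (proj1_sig (cid (image_sub_preimage y)))).

Lemma image_liftE r y m : f m = val y -> image_lift r y = \pi_Q (tens _ r m).
Proof.
rewrite /image_lift; case: (cid (image_sub_preimage y)) => m' /= <- fm.
apply/eqP; rewrite -subr_eq0 -raddfB pi_quot_eq0.
have [tDl tDr tA] := tens_balanced nmul' (@lact R M).
have [k ik] : exists k, i k = m' - m by apply/ker_f; rewrite raddfB /= fm subrr.
rewrite -(zmod_morphism_of_morphD (tDr r)) -ik.
by rewrite -(tensor_mapE i_lin.1 i_lin.2) image_pred_im.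
Qed.

Lemma image_lift_balanced : balanced nmul' (@lact R L) image_lift.
Proof.
have [tDl tDr tA] := tens_balanced nmul' (@lact R M).
have [fD f_lact] := f_lin.
split=> [r r' y|r y y'|r a y].
- by rewrite /image_lift tDl raddfD.
- case: (image_sub_preimage y) (image_sub_preimage y') => m fm [m' fm'].
  rewrite (image_liftE r fm) (image_liftE r fm') (@image_liftE r (y + y') (m + m')).
    by rewrite tDr raddfD.
  by rewrite fD fm fm'.
case: (image_sub_preimage y) => m fm.
rewrite (image_liftE (nmul r a) fm) (@image_liftE r (lact a y) (lact a m)) ?tA //.
by rewrite f_lact fm.
Qed.

Lemma kernel_gen k : exists s : seq (R * K), k = \sum_(p <- s) lact p.1 p.2.
Proof.
have [fD f_lact] := f_lin; have [s iks] := M_tu.1 (i k).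
have fs0 : \sum_(p <- s) lact p.1 (f p.2) = 0.
  under eq_bigr do rewrite -f_lact.
  by rewrite -(morphD_sum fD) -iks; apply/ker_f; exists k.
pose sL := [seq (p.1, ImageSub (image_pred_im f p.2) : L) | p <- s].
have sL0 : tensor_zero nmul' (@lact R L) sL.
  have val_lin : lmod_linear (val : L -> N) by split=> [y y'|r y]; [exact: raddfD|].
  apply/tensor_zero_RtE/(flat (urt_linear_of_lmod val_lin) val_inj).
  apply/tensor_zero_RtE/N_tu.2; rewrite -map_comp big_map; exact: fs0.
have := sL0 Q image_lift image_lift_balanced; rewrite big_map.
have -> : \sum_(p <- s) image_lift p.1 (ImageSub (image_pred_im f p.2) : L) =
          \pi_Q (\sum_(p <- s) tens _ p.1 p.2).
  by rewrite raddf_sum; apply: eq_bigr => p _; exact: image_liftE.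
move/eqP; rewrite pi_quot_eq0 => /image_predP[t it].
have [u tu] := tensor_sumP t.
exists u; apply: i_inj.
have -> : \sum_(p <- u) lact p.1 p.2 = lmod_mult t.
  by rewrite tu raddf_sum /=; apply: eq_bigr => p _; rewrite lmod_multE.
rewrite -(lmod_mult_map i_lin) it iks raddf_sum /=.
by apply: eq_bigr => p _; rewrite lmod_multE.
Qed.

Lemma tunital_kernel : tunital_mod K.
Proof. split; [exact: kernel_gen | exact: kernel_tensor_zero]. Qed.
End ClosedUnderKernelsOfFlat.

Lemma tunital_closed_under_kernels_of_flat (R : NRing) :
  flat_R_over_Rt R -> tunital_closed_under_kernels R.
Proof. by move=> flat M N K f i; apply: tunital_kernel. Qed.

Theorem corollary7p4 (R : NRing) :
  tunital_ring R ->
  (tunital_closed_under_kernels R <-> flat_R_over_Rt R).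
Proof.
move=> tR; split; first exact: flat_of_tunital_closed_under_kernels.
exact: tunital_closed_under_kernels_of_flat.
Qed.
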